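(* Let $r$ be a positive integer, let $G$ be a graph on $n$ vertices, and let $\mathcal{G}_0$ be the auxiliary graph of $G$ defined below. Suppose $\mathcal{G}_0$ has average degree $d>0$. Then there exist $D_1,D_2\geq d/4$ and a non-empty bipartite subgraph $\mathcal{G}$ of $\mathcal{G}_0$ with parts $X_1,X_2$ such that for every $x\in X_1$ we have $d_{\mathcal{G}}(x)\geq\frac{D_1}{256r^2(\log n)^2}$ and $d_{\mathcal{G}_0}(x)\leq D_1$, and for every $x\in X_2$ we have $d_{\mathcal{G}}(x)\geq\frac{D_2}{256r^2(\log n)^2}$ and $d_{\mathcal{G}_0}(x)\leq D_2$.
   Context: Given a graph $G$ and a positive integer $r$, the auxiliary graph $\mathcal{G}_0$ has as vertex set the family of all $r$-element subsets of $V(G)$, and two such sets $U,W$ are adjacent in $\mathcal{G}_0$ if $U\cap W=\emptyset$ and $uw\in E(G)$ for all $u\in U$, $w\in W$. $d_H(x)$ denotes the degree of $x$ in $H$. Logarithms are base $2$. *)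

From HB Require Import structures.
From mathcomp Require Import all_boot all_order all_algebra.
From mathcomp Require Import all_classical all_reals all_analysis.
Set Implicit Arguments. Unset Strict Implicit. Unset Printing Implicit Defensive.
Import Order.TTheory GRing.Theory Num.Theory.

Definition simple_graph (V : finType) (e : rel V) : Prop :=
  symmetric e /\ irreflexive e.

(* Auxiliary graph G_0: vertices are the r-element subsets of V;
   U ~ W iff U, W disjoint and uw is an edge for all u in U, w in W. *)
Definition aux_adj (V : finType) (e : rel V) (r : nat) (U W : {set V}) : bool :=
  [&& #|U| == r, #|W| == r, [disjoint U & W] &
      [forall u in U, forall w in W, e u w]].

Definition aux_vert (V : finType) (r : nat) : {set {set V}} :=
  [set U : {set V} | #|U| == r].

Definition deg (T : finType) (h : rel T) (x : T) : nat := #|[set y | h x y]|.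

Definition aux_avg_deg (R : realType) (V : finType) (e : rel V) (r : nat) : R :=
  ((\sum_(U in aux_vert V r) deg (aux_adj e r) U)%:R / (#|aux_vert V r|)%:R)%R.

Definition log2 (R : realType) (x : R) : R := (ln x / ln 2)%R.

From HB Require Import structures.
From mathcomp Require Import all_boot all_order all_algebra.
From mathcomp Require Import all_classical all_reals all_analysis.
From mathcomp Require Import lra ring.
Set Implicit Arguments. Unset Strict Implicit. Unset Printing Implicit Defensive.
Import Order.TTheory GRing.Theory Num.Theory.
Local Open Scope ring_scope.

(* Let S be the number of ordered adjacent pairs of G_0, so S = d |V(G_0)|.
   Every non-isolated vertex U of G_0 gets a dyadic degree class
   c(U) = floor(log2 deg U) (at most r log n + 1 classes) and a binary label,
   the digits of the index of some element of U.  Adjacent vertices of G_0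
   are disjoint sets, so their labels differ in one of about log n digits;
   hence every edge joins the two halves of some cell (i, j, k): class i with
   digit k equal to 0, class j with digit k equal to 1.  With the weights
   alpha_i = max(2^(i+1), d/4) / K, K = 256 r^2 (log n)^2, the total weight of
   all cells is below S/2, which is at most the number of edges inside cells,
   so some cell carries more edges than weight.  In that cell, a pair (A, B)
   maximising e(A, B) - alpha_i |A| - alpha_j |B| has minimum degrees alpha_i
   and alpha_j across, while D = max(2^(i+1), d/4) bounds G_0-degrees in class i. *)

Lemma degE (T : finType) (h : rel T) (x : T) : deg h x = (\sum_y h x y)%N.
Proof.
rewrite /deg -sum1_card big_mkcond /=; apply: eq_bigr => y _.
by rewrite inE; case: (h x y).
Qed.

Definition edg (T : finType) (h : rel T) (A B : {set T}) : nat :=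
  (\sum_(a in A) \sum_(b in B) h a b)%N.

Lemma edgE (T : finType) (h : rel T) (A B : {set T}) :
  edg h A B = (\sum_x \sum_y [&& x \in A, y \in B & h x y])%N.
Proof.
rewrite /edg big_mkcond /=; apply: eq_bigr => x _.
case: (x \in A) => /=; last by rewrite big1.
by rewrite big_mkcond /=; apply: eq_bigr => y _; case: (y \in B).
Qed.

(* Deletion argument: if e(P1, P2) exceeds a1 |P1| + a2 |P2|, then a pair
   (A, B) maximising e(A, B) - a1 |A| - a2 |B| is non-empty and has every vertex
   of A sending at least a1 edges to B and every vertex of B at least a2 to A,
   since deleting a vertex cannot increase the maximum. *)
Lemma dense_bipartite_core (R : realType) (T : finType) (h : rel T)
    (P1 P2 : {set T}) (a1 a2 : R) :
  symmetric h -> 0 <= a2 -> a1 * #|P1|%:R + a2 * #|P2|%:R < (edg h P1 P2)%:R ->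
  exists A B : {set T}, [/\ A \subset P1, B \subset P2, (0 < #|A|)%N,
   {in A, forall x, a1 <= (\sum_(y in B) h x y)%N%:R} &
   {in B, forall y, a2 <= (\sum_(x in A) h y x)%N%:R}].
Proof.
move=> hs a2_ge0 dense.
pose f (p : {set T} * {set T}) : R :=
  (edg h p.1 p.2)%:R - a1 * #|p.1|%:R - a2 * #|p.2|%:R.
pose admissible (p : {set T} * {set T}) := (p.1 \subset P1) && (p.2 \subset P2).
have adm0 : admissible (P1, P2) by rewrite /admissible /= !subxx.
case: (arg_maxP f adm0) => [[A B] /andP[/= sA sB] maxAB].
have f_gt0 : 0 < f (A, B) by apply: lt_le_trans (maxAB _ adm0); rewrite /f /=; lra.
exists A, B; split => //.
- rewrite lt0n; apply/negP => /eqP/cards0_eq A0.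
  move: f_gt0; rewrite /f /= A0 /edg big_set0 cards0 /=.
  by have := mulr_ge0 a2_ge0 (ler0n R #|B|); lra.
- move=> x xA.
  have adm : admissible (A :\ x, B).
    by rewrite /admissible /= sB andbT (fintype.subset_trans _ sA) // subsetDl.
  have := maxAB _ adm; rewrite /f /= /edg (big_setD1 _ xA) /= (cardsD1 x A) xA /=.
  rewrite !natrD; lra.
- move=> y yB.
  have adm : admissible (A, B :\ y).
    by rewrite /admissible /= sA (fintype.subset_trans _ sB) // subsetDl.
  have := maxAB _ adm; rewrite /f /=.
  have -> : edg h A B = (\sum_(x in A) h y x + edg h A (B :\ y))%N.
    rewrite /edg -big_split /=; apply: eq_bigr => a _.
    by rewrite (big_setD1 _ yB) /= hs.
  rewrite (cardsD1 y B) yB /= !natrD; lra.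
Qed.

Lemma binary_digit_separation (b a c : nat) :
  (a < 2 ^ b)%N -> (c < 2 ^ b)%N -> a != c ->
  exists k : 'I_b, odd (a %/ 2 ^ k) != odd (c %/ 2 ^ k).
Proof.
elim: b a c => [|b IH] a c; first by rewrite expn0 !ltnS !leqn0 => /eqP -> /eqP ->.
move=> a_lt c_lt a_neq_c.
have [odd_eq|odd_neq] := eqVneq (odd a) (odd c); last first.
  by exists ord0; rewrite /= expn0 !divn1.
have half_neq : a./2 != c./2.
  apply: contra a_neq_c => /eqP eq_half.
  by rewrite -(odd_double_half a) -(odd_double_half c) odd_eq eq_half.
have half_lt n : (n < 2 ^ b.+1)%N -> (n./2 < 2 ^ b)%N.
  by move=> n_lt; rewrite -divn2 ltn_divLR // -expnSr.
have [k hk] := IH _ _ (half_lt _ a_lt) (half_lt _ c_lt) half_neq.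
by exists (lift ord0 k); rewrite /= /bump /= add1n expnS !divnMA !divn2.
Qed.

Section ClassBitPartition.

Variables (R : realType) (T : finType) (h : rel T) (P : {set T}) (m b : nat).
Variables (cls : T -> 'I_m) (bit : 'I_b -> T -> bool) (alpha : 'I_m -> R).
Hypothesis h_sym : symmetric h.
Hypothesis h_supp : forall x y, h x y -> x \in P.
Hypothesis bit_sep : forall x y, h x y -> exists k, bit k x != bit k y.
Hypothesis alpha_ge0 : forall i, 0 <= alpha i.

Definition part (i : 'I_m) (k : 'I_b) (s : bool) : {set T} :=
  [set x in P | (cls x == i) && (bit k x == s)].

(* A cell (i, j, k) pairs class i with bit k = 0 and class j with bit k = 1. *)
Definition cell := ('I_m * 'I_m * 'I_b)%type.

Definition cell_edges (t : cell) : nat :=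
  edg h (part t.1.1 t.2 false) (part t.1.2 t.2 true).

Definition cell_cost (t : cell) : R :=
  alpha t.1.1 * #|part t.1.1 t.2 false|%:R + alpha t.1.2 * #|part t.1.2 t.2 true|%:R.

Lemma part_weight k s :
  \sum_i alpha i * #|part i k s|%:R = \sum_(x in P | bit k x == s) alpha (cls x).
Proof.
rewrite (partition_big cls predT) //=; apply: eq_bigr => i _.
rewrite mulr_natr -sumr_const; apply: eq_big => [x|x].
  by rewrite !inE; case: (x \in P); case: (cls x == i); case: (bit k x == s).
by rewrite inE => /and3P[_ /eqP-> _].
Qed.

Lemma sum_add_pairs (F G : 'I_m -> R) :
  \sum_i \sum_j (F i + G j) = (\sum_i F i + \sum_j G j) *+ m.
Proof.
have row i : \sum_j (F i + G j) = F i *+ m + \sum_j G j.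
  by rewrite big_split /= sumr_const card_ord.
under eq_bigr => i _ do rewrite row.
by rewrite big_split /= sumr_const card_ord sumrMnl mulrnDl.
Qed.

(* Each vertex of P lies in m b cell sides, so the total cost is m b times its weight. *)
Lemma cost_total :
  \sum_t cell_cost t = (m * b)%:R * \sum_(x in P) alpha (cls x).
Proof.
have split_bit k : \sum_(x in P | bit k x == false) alpha (cls x)
    + \sum_(x in P | bit k x == true) alpha (cls x) = \sum_(x in P) alpha (cls x).
  rewrite [RHS](bigID (fun x => bit k x)) addrC /=.
  by congr (_ + _); apply: eq_bigl => x; case: (bit k x); rewrite ?andbT ?andbF.
have layer k : \sum_i \sum_j cell_cost (i, j, k) = (\sum_(x in P) alpha (cls x)) *+ m.
  by rewrite (sum_add_pairs (fun i => alpha i * #|part i k false|%:R)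
    (fun j => alpha j * #|part j k true|%:R)) !part_weight split_bit.
have -> : \sum_t cell_cost t = \sum_i \sum_j \sum_k cell_cost (i, j, k).
  by rewrite pair_bigA pair_bigA; apply: eq_bigr => -[[]].
under eq_bigr => i _ do rewrite exchange_big /=.
rewrite exchange_big /=.
under eq_bigr => k _ do rewrite layer.
by rewrite sumr_const card_ord -mulrnA mulr_natl mulnC.
Qed.

(* Every related pair (x, y) lies in a cell in one of its two orientations,
   so the cells contain at least half of the ordered related pairs. *)
Lemma edges_le_cells :
  (\sum_x \sum_y h x y <= 2 * \sum_t cell_edges t)%N.
Proof.
pose cross x y := (\sum_(t : cell)
  [&& x \in part t.1.1 t.2 false & y \in part t.1.2 t.2 true])%N.
have cells_eq : (\sum_t cell_edges t = \sum_x \sum_y h x y * cross x y)%N.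
  under eq_bigr do rewrite /cell_edges edgE.
  rewrite exchange_big; apply: eq_bigr => x _.
  rewrite exchange_big; apply: eq_bigr => y _.
  rewrite big_distrr; apply: eq_bigr => t _.
  by case: (h x y); case: (x \in _); case: (y \in _).
have edge_seen x y : h x y -> (0 < cross x y + cross y x)%N.
  move=> hxy; have [k bit_neq] := bit_sep hxy.
  have xP : x \in P := h_supp hxy.
  have yP : y \in P by apply: (h_supp (y := x)); rewrite h_sym.
  rewrite addn_gt0; case bx: (bit k x) in bit_neq.
  - apply/orP; right; rewrite /cross (bigD1 (cls y, cls x, k)) //= !inE.
    by rewrite xP yP !eqxx bx /=; move: bit_neq; case: (bit k y).
  - apply/orP; left; rewrite /cross (bigD1 (cls x, cls y, k)) //= !inE.
    by rewrite xP yP !eqxx bx /=; move: bit_neq; case: (bit k y).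
have cross_sym : (\sum_x \sum_y h x y * cross y x = \sum_x \sum_y h x y * cross x y)%N.
  by rewrite exchange_big; apply: eq_bigr => x _; apply: eq_bigr => y _; rewrite h_sym.
rewrite cells_eq mul2n -addnn -{1}cross_sym -big_split /=.
apply: leq_sum => x _; rewrite -big_split /=; apply: leq_sum => y _.
rewrite -mulnDr; case hxy: (h x y) => //=.
by rewrite mul1n addnC; apply: edge_seen.
Qed.

Lemma exists_dense_cell :
  (2 * (m * b))%:R * \sum_(x in P) alpha (cls x) < (\sum_x \sum_y h x y)%N%:R ->
  exists t, cell_cost t < (cell_edges t)%:R.
Proof.
move=> sparse_cost.
have [t dense|sparse] := pickP (fun t => cell_cost t < (cell_edges t)%:R).
  by exists t.
have edges_le : (\sum_t cell_edges t)%:R <= \sum_t cell_cost t.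
  by rewrite natr_sum; apply: ler_sum => t _; rewrite leNgt sparse.
have := edges_le_cells; rewrite -(ler_nat R) natrM cost_total in edges_le *.
rewrite natrM in sparse_cost; lra.
Qed.

Lemma dense_class_pair :
  (2 * (m * b))%:R * \sum_(x in P) alpha (cls x) < (\sum_x \sum_y h x y)%N%:R ->
  exists (i j : 'I_m) (A B : {set T}),
    [/\ A \subset P, B \subset P, (0 < #|A|)%N & [disjoint A & B]] /\
    {in A, forall x, cls x = i} /\ {in B, forall y, cls y = j} /\
    {in A, forall x, alpha i <= (\sum_(y in B) h x y)%N%:R} /\
    {in B, forall y, alpha j <= (\sum_(x in A) h y x)%N%:R}.
Proof.
move=> /exists_dense_cell[[[i j] k] dense].
have [A [B [sA sB A_gt0 degA degB]]] :=
  dense_bipartite_core h_sym (alpha_ge0 j) dense.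
have inA x : x \in A -> [/\ x \in P, cls x = i & bit k x = false].
  by move/(fintype.subsetP sA); rewrite !inE => /and3P[-> /eqP-> /eqP->].
have inB x : x \in B -> [/\ x \in P, cls x = j & bit k x = true].
  by move/(fintype.subsetP sB); rewrite !inE => /and3P[-> /eqP-> /eqP->].
exists i, j, A, B; split; last split; last split.
- split => //.
  + by apply/fintype.subsetP => x /inA[].
  + by apply/fintype.subsetP => x /inB[].
  + rewrite -setI_eq0; apply/eqP/setP => x; rewrite !inE.
    by apply/negP => /andP[/inA[_ _ bx] /inB[_ _]]; rewrite bx.
- by move=> x /inA[].
- by move=> x /inB[].
- by split.
Qed.

End ClassBitPartition.

Definition cross_rel (T : finType) (h : rel T) (A B : {set T}) : rel T :=
  fun x y => (((x \in A) && (y \in B)) || ((x \in B) && (y \in A))) && h x y.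

Section CrossRelation.

Variables (T : finType) (h : rel T) (A B : {set T}).

Lemma cross_rel_sym : symmetric h -> symmetric (cross_rel h A B).
Proof.
move=> h_sym x y; rewrite /cross_rel h_sym; congr (_ && _).
by case: (x \in A); case: (x \in B); case: (y \in A); case: (y \in B).
Qed.

Lemma cross_relP x y : cross_rel h A B x y ->
  h x y /\ ((x \in A /\ y \in B) \/ (x \in B /\ y \in A)).
Proof. by case/andP=> /orP[] /andP[? ?] ?; split => //; [left | right]. Qed.

Hypothesis AB_disj : [disjoint A & B].

Lemma deg_cross_rel_l x : x \in A -> deg (cross_rel h A B) x = (\sum_(y in B) h x y)%N.
Proof.
move=> xA; rewrite degE [RHS]big_mkcond; apply: eq_bigr => y _.
by rewrite /cross_rel xA (disjointFr AB_disj xA) /=; case: (y \in B).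
Qed.

Lemma deg_cross_rel_r x : x \in B -> deg (cross_rel h A B) x = (\sum_(y in A) h x y)%N.
Proof.
move=> xB; have xA : x \notin A by apply/negP => xA; rewrite (disjointFr AB_disj xA) in xB.
rewrite degE [RHS]big_mkcond; apply: eq_bigr => y _.
by rewrite /cross_rel xB (negbTE xA) /=; case: (y \in A).
Qed.

End CrossRelation.

Section AuxiliaryGraph.

Variables (V : finType) (e : rel V) (r : nat).
Local Notation adj := (aux_adj e r).

Lemma aux_adj_sym : symmetric e -> symmetric adj.
Proof.
move=> e_sym U W; rewrite /aux_adj disjoint_sym.
case: (#|U| == r); case: (#|W| == r); case: [disjoint W & U] => //=.
apply/forallP/forallP => adj_all x; apply/implyP => xW;
  apply/forallP => y; apply/implyP => yU; rewrite e_sym;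
  by move: (adj_all y) => /implyP/(_ yU)/forallP/(_ x)/implyP/(_ xW).
Qed.

Lemma aux_adj_vert U W : adj U W -> U \in aux_vert V r /\ W \in aux_vert V r.
Proof. by rewrite /aux_adj !inE => /and4P[-> -> _ _]. Qed.

(* A vertex of G_0 has at most C(n, r) <= n^r neighbours. *)
Lemma aux_deg_bound U : (deg adj U <= #|V| ^ r)%N.
Proof.
apply: (@leq_trans #|aux_vert V r|).
  by apply: subset_leq_card; apply/fintype.subsetP => W; rewrite inE => /aux_adj_vert[].
rewrite /aux_vert card_draws (@leq_trans (#|V| ^_ r)) //.
  by rewrite -bin_ffact leq_pmulr // fact_gt0.
rewrite ffact_prod -(card_ord r) -prod_nat_const card_ord.
by apply: leq_prod => i _; rewrite leq_subr.
Qed.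

Lemma aux_deg_sum :
  (\sum_(U in aux_vert V r) deg adj U = \sum_U \sum_W adj U W)%N.
Proof.
rewrite big_mkcond /=; apply: eq_bigr => U _; rewrite degE.
case: ifP => // /negbT U_out; rewrite big1 // => W _.
by case: (boolP (adj U W)) => // /aux_adj_vert[UA _]; rewrite UA in U_out.
Qed.

Lemma aux_adj_two_vertices U W : (0 < r)%N -> adj U W -> (2 <= #|V|)%N.
Proof.
move=> r_gt0 /and4P[/eqP cardU /eqP cardW UW_disj _].
have [u uU] : exists u, u \in U by apply/set0Pn; rewrite -card_gt0 cardU.
have [w wW] : exists w, w \in W by apply/set0Pn; rewrite -card_gt0 cardW.
have uw : u != w by apply: contraTneq wW => <-; rewrite (disjointFr UW_disj uU).
by have := max_card [set u; w]; rewrite cards2 uw.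
Qed.

(* Label of an r-set: the index of one of its elements (0 for the empty set). *)
Definition vrank (U : {set V}) : nat :=
  if [pick u in U] is Some u then enum_rank u else 0%N.

Definition vbit (b : nat) (k : 'I_b) (U : {set V}) : bool := odd (vrank U %/ 2 ^ k).

(* Labels are at most n, hence below 2^((log n) + 1). *)
Lemma vrank_le U : (vrank U <= #|V|)%N.
Proof. by rewrite /vrank; case: pickP => // u _; apply/ltnW/ltn_ord. Qed.

(* Adjacent r-sets are disjoint and non-empty, so their labels differ. *)
Lemma aux_adj_vrank U W : (0 < r)%N -> adj U W -> vrank U != vrank W.
Proof.
move=> r_gt0 /and4P[/eqP cardU /eqP cardW UW_disj _]; rewrite /vrank.
case: pickP => [u uU|U0]; last first.
  by move: cardU r_gt0; rewrite (eq_card0 U0) => <-.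
case: pickP => [w wW|W0]; last first.
  by move: cardW r_gt0; rewrite (eq_card0 W0) => <-.
apply: contraTneq wW => /val_inj/enum_rank_inj <-.
by rewrite (disjointFr UW_disj uU).
Qed.

Lemma aux_bit_sep U W : (0 < r)%N -> adj U W ->
  exists k : 'I_(trunc_log 2 #|V|).+1, vbit k U != vbit k W.
Proof.
move=> r_gt0 UW; have lt_pow X : (vrank X < 2 ^ (trunc_log 2 #|V|).+1)%N.
  exact: leq_ltn_trans (vrank_le X) (trunc_log_ltn _ _).
exact: binary_digit_separation (lt_pow U) (lt_pow W) (aux_adj_vrank r_gt0 UW).
Qed.

(* Dyadic degree class floor(log2 deg U), in the range given by aux_deg_bound. *)
Definition dclass (U : {set V}) : 'I_(trunc_log 2 (#|V| ^ r)).+1 :=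
  inord (trunc_log 2 (deg adj U)).

Lemma dclassE U : dclass U = trunc_log 2 (deg adj U) :> nat.
Proof. by rewrite inordK // ltnS leq_trunc_log // aux_deg_bound. Qed.

End AuxiliaryGraph.

Section DyadicBounds.

Variable R : realType.

Lemma log2_nat_bound (a n k : nat) : (0 < n)%N -> (2 ^ a <= n ^ k)%N ->
  (a%:R : R) <= k%:R * log2 (n%:R : R).
Proof.
move=> n_gt0 pow_le.
have ln2_gt0 : (0 : R) < ln 2 by apply: ln_gt0; lra.
have n_gt0R : (0 : R) < n%:R by rewrite ltr0n.
have : ln ((2 : R) ^+ a) <= ln ((n%:R : R) ^+ k).
  by rewrite ler_ln ?posrE ?exprn_gt0 // -!natrX ler_nat.
rewrite (lnXn a (_ : (0 : R) < 2)) // (lnXn k n_gt0R) /log2.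
rewrite -(mulr_natr (ln 2) a) -(mulr_natr (ln n%:R) k) => ln_le.
by rewrite mulrA (ler_pdivlMr _ _ ln2_gt0) mulrC [k%:R * _]mulrC.
Qed.

Lemma log2_ge1 (n : nat) : (2 <= n)%N -> 1 <= log2 (n%:R : R).
Proof. by move=> n_ge2; have := @log2_nat_bound 1 n 1 (ltnW n_ge2); rewrite !expn1 mul1r; apply. Qed.

Lemma trunc_log_pow_bound (n k : nat) : (2 <= n)%N -> (0 < k)%N ->
  ((trunc_log 2 (n ^ k)).+1%:R : R) <= 2 * k%:R * log2 (n%:R : R).
Proof.
move=> n_ge2 k_gt0.
have n_gt0 : (0 < n)%N := ltnW n_ge2.
have pow_gt0 : (0 < n ^ k)%N by rewrite expn_gt0 n_gt0.
have := log2_nat_bound n_gt0 (trunc_logP (leqnn 2) pow_gt0).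
have := log2_ge1 n_ge2; have : (1 : R) <= k%:R by rewrite ler1n.
rewrite -natr1; nra.
Qed.

(* Degree cap of class i: max(2^(i+1), d/4); it becomes D1 or D2. *)
Definition dyadic_cap (d : R) (i : nat) : R := Num.max (2 ^ i.+1)%:R (d / 4).

Lemma dyadic_cap_ge (d : R) (i : nat) : d / 4 <= dyadic_cap d i.
Proof. by rewrite le_max lexx orbT. Qed.

Lemma le_dyadic_cap (d : R) (D : nat) : D%:R <= dyadic_cap d (trunc_log 2 D).
Proof. by rewrite le_max ler_nat ltnW ?trunc_log_ltn. Qed.

Lemma dyadic_cap_le (d : R) (D : nat) : 0 <= d -> (0 < D)%N ->
  dyadic_cap d (trunc_log 2 D) <= 2 * D%:R + d / 4.
Proof.
move=> d_ge0 D_gt0; have := trunc_logP (leqnn 2) D_gt0.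
rewrite -(leq_pmul2l (isT : (0 < 2)%N)) -expnS -(ler_nat R) natrM => pow_le.
rewrite ge_max; apply/andP; split; first lra.
by have : (0 : R) <= D%:R by []; lra.
Qed.

End DyadicBounds.

Section AverageDegreeEstimate.

Variables (R : realType) (V : finType) (e : rel V) (r : nat).
Hypothesis r_gt0 : (0 < r)%N.

Local Notation adj := (aux_adj e r).
Local Notation d := (aux_avg_deg R e r).
Local Notation S := (\sum_U \sum_W aux_adj e r U W)%N.
Local Notation L := (log2 (#|V|%:R : R)).

Definition aux_support : {set {set V}} :=
  [set U in aux_vert V r | (0 < deg adj U)%N].

Lemma aux_support_adj U W : adj U W -> U \in aux_support.
Proof.
move=> UW; have [UA _] := aux_adj_vert UW.
by rewrite inE UA card_gt0; apply/set0Pn; exists W; rewrite inE.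
Qed.

Lemma aux_edges_avg : 0 < d -> (0 < S)%N /\ S%:R = d * #|aux_vert V r|%:R.
Proof.
rewrite /aux_avg_deg aux_deg_sum => d_gt0; split.
  by rewrite lt0n; apply: contraTneq d_gt0 => ->; rewrite mul0r ltxx.
have : #|aux_vert V r|%:R != 0 :> R.
  by apply: contraTneq d_gt0 => ->; rewrite invr0 mulr0 ltxx.
by move=> N_neq0; rewrite -mulrA mulVf ?mulr1.
Qed.

(* A non-empty G_0 lives on a graph with at least two vertices, so log2 n >= 1. *)
Lemma aux_two_vertices : (0 < S)%N -> (2 <= #|V|)%N.
Proof.
have [[U W] /= UW _|no_edge] := pickP (fun p : {set V} * {set V} => adj p.1 p.2).
  exact: aux_adj_two_vertices r_gt0 UW.
by rewrite big1 // => U _; rewrite big1 // => W _; rewrite (no_edge (U, W)).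
Qed.

(* Summing the caps over non-isolated vertices gives at most 2S + d|V(G_0)|/4 = 9S/4. *)
Lemma aux_support_cap : 0 < d ->
  \sum_(U in aux_support) dyadic_cap d (dclass e r U) <= 9 / 4 * S%:R.
Proof.
move=> d_gt0; have [_ S_eq] := aux_edges_avg d_gt0.
pose w U := 2 * (deg adj U)%:R + d / 4.
have w_ge0 U : 0 <= w U by rewrite /w; have := ler0n R (deg adj U); lra.
have cap_le : \sum_(U in aux_support) dyadic_cap d (dclass e r U)
    <= \sum_(U in aux_support) w U.
  apply: ler_sum => U; rewrite inE dclassE => /andP[_ deg_gt0].
  exact: dyadic_cap_le (ltW d_gt0) deg_gt0.
have support_le : \sum_(U in aux_support) w U <= \sum_(U in aux_vert V r) w U.
  rewrite [leRHS](bigID (fun U => (0 < deg adj U)%N)) /=.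
  rewrite (eq_bigl (fun U => (U \in aux_vert V r) && (0 < deg adj U)%N)) => [|U].
    by rewrite lerDl sumr_ge0.
  by rewrite inE.
have total : \sum_(U in aux_vert V r) w U = 2 * S%:R + d / 4 * #|aux_vert V r|%:R.
  by rewrite big_split /= -mulr_sumr -natr_sum aux_deg_sum sumr_const (mulr_natr (d / 4)).
by have := le_trans cap_le support_le; rewrite total S_eq => caps_le; lra.
Qed.

(* Since (#classes)(#bits) <= 4 r (log2 n)^2, twice the total cell weight is
   at most 18 S / (256 r) < S. *)
Lemma aux_class_cost_small : 0 < d ->
  (2 * ((trunc_log 2 (#|V| ^ r)).+1 * (trunc_log 2 #|V|).+1))%:R *
    \sum_(U in aux_support) (dyadic_cap d (dclass e r U) / (256 * r%:R ^+ 2 * L ^+ 2))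
  < S%:R.
Proof.
move=> d_gt0; have [S_gt0 _] := aux_edges_avg d_gt0.
have n_ge2 := aux_two_vertices S_gt0.
have L_ge1 : 1 <= L := log2_ge1 R n_ge2.
have classes_le := trunc_log_pow_bound R n_ge2 r_gt0.
have bits_le := trunc_log_pow_bound R n_ge2 (ltn0Sn 0).
rewrite expn1 in bits_le.
have weight_le := aux_support_cap d_gt0.
have r_ge1 : (1 : R) <= r%:R by rewrite ler1n.
have L_gt0 : 0 < L by lra.
have K_gt0 : 0 < 256 * r%:R ^+ 2 * L ^+ 2.
  by apply: mulr_gt0; [apply: mulr_gt0 => //; apply: exprn_gt0 | apply: exprn_gt0]; lra.
rewrite -mulr_suml mulrA ltr_pdivrMr // !natrM.
set M := (trunc_log 2 (#|V| ^ r)).+1%:R in classes_le *.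
set B := (trunc_log 2 #|V|).+1%:R in bits_le *.
set caps := \sum_(U in aux_support) _ in weight_le *.
set edges := (\sum_U \sum_W _)%:R in weight_le *.
have caps_ge0 : 0 <= caps.
  apply: sumr_ge0 => U _; apply: le_trans (dyadic_cap_ge _ _).
  by apply: divr_ge0; [exact: ltW|].
have edges_gt0 : 0 < edges by rewrite ltr0n.
have MB_le : M * B <= (2 * r%:R * L) * (2 * L).
  by apply: ler_pM; rewrite ?ler0n //; lra.
have cost_le : M * B * caps <= (2 * r%:R * L) * (2 * L) * (9 / 4 * edges).
  by apply: ler_pM => //; rewrite mulr_ge0 ?ler0n.
have p_gt0 : 0 < r%:R * (L * L) * edges.
  by apply: mulr_gt0 => //; apply: mulr_gt0; [lra | apply: mulr_gt0].
have K_large : 18 * (r%:R * (L * L) * edges) < edges * (256 * r%:R ^+ 2 * L ^+ 2).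
  have -> : edges * (256 * r%:R ^+ 2 * L ^+ 2) = 256 * r%:R * (r%:R * (L * L) * edges).
    by ring.
  by rewrite ltr_pM2r //; lra.
lra.
Qed.


End AverageDegreeEstimate.

Theorem lemma5p4 (R : realType) (V : finType) (e : rel V) (r : nat) (d : R) :
  simple_graph e -> (0 < r)%N ->
  d = aux_avg_deg R e r -> 0 < d ->
  exists (D1 D2 : R) (X1 X2 : {set {set V}}) (H : rel {set V}),
    d / 4 <= D1 /\ d / 4 <= D2 /\
    (* G = (X1 :|: X2, H) is a non-empty bipartite subgraph of G_0 with parts X1, X2 *)
    X1 \subset aux_vert V r /\ X2 \subset aux_vert V r /\ [disjoint X1 & X2] /\
    (0 < #|X1 :|: X2|)%N /\
    symmetric H /\
    (forall x y, H x y -> aux_adj e r x y /\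
           ((x \in X1 /\ y \in X2) \/ (x \in X2 /\ y \in X1))) /\
    (forall x, x \in X1 ->
       D1 / (256 * r%:R ^+ 2 * (log2 (#|V|%:R : R)) ^+ 2) <= (deg H x)%:R
       /\ (deg (aux_adj e r) x)%:R <= D1) /\
    (forall x, x \in X2 ->
       D2 / (256 * r%:R ^+ 2 * (log2 (#|V|%:R : R)) ^+ 2) <= (deg H x)%:R
       /\ (deg (aux_adj e r) x)%:R <= D2).
Proof.
move=> [e_sym _] r_gt0 -> d_gt0.
set K := 256 * _ * _.
have adj_sym := aux_adj_sym r e_sym.
have alpha_ge0 i : 0 <= dyadic_cap (aux_avg_deg R e r) i / K.
  apply: divr_ge0; first by apply: le_trans (dyadic_cap_ge _ _); lra.
  by apply: mulr_ge0; [apply: mulr_ge0|]; rewrite ?sqr_ge0 ?ler0n.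
have [i [j [A [B [[sA sB A_gt0 AB_disj] [clsA [clsB [degA degB]]]]]]]] :=
  dense_class_pair (cls := dclass e r) adj_sym (fun U W => @aux_support_adj V e r U W)
    (fun U W => aux_bit_sep r_gt0) alpha_ge0 (@aux_class_cost_small R V e r r_gt0 d_gt0).
have in_vert X : X \in aux_support e r -> X \in aux_vert V r by rewrite inE => /andP[].
exists (dyadic_cap (aux_avg_deg R e r) i), (dyadic_cap (aux_avg_deg R e r) j), A, B,
  (cross_rel (aux_adj e r) A B).
do 2 (split; first exact: dyadic_cap_ge).
split; first by apply/fintype.subsetP => x /(fintype.subsetP sA)/in_vert.
split; first by apply/fintype.subsetP => x /(fintype.subsetP sB)/in_vert.
split; first exact: AB_disj.
split; first by rewrite (leq_trans A_gt0) // subset_leq_card // finset.subsetUl.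
split; first exact: cross_rel_sym.
split; first by move=> x y /cross_relP.
split=> x xX; split.
- by rewrite deg_cross_rel_l //; exact: degA.
- by rewrite -(clsA x xX) dclassE; exact: le_dyadic_cap.
- by rewrite deg_cross_rel_r //; exact: degB.
- by rewrite -(clsB x xX) dclassE; exact: le_dyadic_cap.
Qed.
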